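(* Let $Y,Z$ be finite-dimensional real or complex vector spaces, let $F\colon Y\to Z$ be quadratic, let $\mathcal A\subset L(Y,Y)$ be a Jordan operator algebra on $Y$, let $\alpha\colon Z\to\mathcal A$, and let $\beta\colon\mathcal A\to L(Z,Z)$ satisfy $F'(y)Ty=\beta(T)F(y)$ for all $y\in Y$, $T\in\mathcal A$. Let nonzero $b_1,\dots,b_s$ and $h>0$ be given and suppose $y_0,y_1,Y_1,\dots,Y_s\in Y$ satisfy the SyDIRK equations for $f(y)=\alpha(F(y))y$: \[ Y_i = y_0 + h\sum_{j=1}^{i-1} b_j f(Y_j) + \frac h2 b_i f(Y_i),\qquad y_1 = y_0 + h\sum_{i=1}^s b_i f(Y_i). \] Then $z_0=F(y_0)$, $Z_i=F(Y_i)$, $z_1=F(y_1)$ satisfy \[ Z_i = z_0 + h\sum_{j=1}^{i-1} b_j\beta(\alpha(Z_j))Z_j + \frac h2 b_i\beta(\alpha(Z_i))Z_i - \frac{h^2}{8}b_i^2\bigl[\beta(\alpha(Z_i))^2-\beta(\alpha(Z_i)^2)\bigr]Z_i, \] \[ z_1 = z_0 + h\sum_{i=1}^s b_i\beta(\alpha(Z_i))Z_i . \]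
   Context: $F$ quadratic means that for every $y_0$, $F(y)=F(y_0)+F'(y_0)(y-y_0)+\tfrac12F''(y-y_0,y-y_0)$ with $F''$ a constant symmetric bilinear map. A Jordan operator algebra on $Y$ is a linear subspace of $L(Y,Y)$ closed under $S\bullet T=\tfrac12(ST+TS)$. *)

From HB Require Import structures.
From mathcomp Require Import all_boot all_order all_algebra.
Set Implicit Arguments. Unset Strict Implicit. Unset Printing Implicit Defensive.
Import Order.TTheory GRing.Theory Num.Theory.
Local Open Scope ring_scope.

(* Scalars: K : numFieldType (covers both the reals and the complex numbers).
   Finite-dimensional vector spaces: vectType K.  L(Y,Z) := 'Hom(Y,Z). *)

Definition symmetric_bilinear (K : numFieldType) (Y Z : vectType K)
    (B : Y -> Y -> Z) : Prop :=
  (forall u v, B u v = B v u) /\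
  (forall (a : K) u v w, B (a *: u + v) w = a *: B u w + B v w).

Definition quadratic (K : numFieldType) (Y Z : vectType K)
    (F : Y -> Z) (F' : Y -> 'Hom(Y, Z)) (F'' : Y -> Y -> Z) : Prop :=
  symmetric_bilinear F'' /\
  forall y0 y, F y = F y0 + F' y0 (y - y0) + 2%:R^-1 *: F'' (y - y0) (y - y0).

Definition jordan_prod (K : numFieldType) (Y : vectType K)
    (S T : 'End(Y)) : 'End(Y) :=
  2%:R^-1 *: ((S \o T)%VF + (T \o S)%VF).

Definition jordan_operator_algebra (K : numFieldType) (Y : vectType K)
    (A : {vspace 'End(Y)}) : Prop :=
  forall S T, S \in A -> T \in A -> jordan_prod S T \in A.

From mathcomp Require Import all_boot all_order all_algebra.
From mathcomp Require Import ring.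
Import GRing.Theory Num.Theory.
Local Open Scope ring_scope.

Set Implicit Arguments.
Unset Strict Implicit.

(* Put T_i = alpha(Z_i), c_i = h b_i / 2 and W_k = y0 + h sum_(j < k) b_j f(Y_j),
   so that Y_i = W_i + c_i T_i Y_i and W_(i+1) = Y_i + c_i T_i Y_i.  For a
   quadratic F, F(y + c d) - F(y - c d) = 2 c F'(y) d, and the hypothesis on
   beta turns F'(Y_i) T_i Y_i into beta(T_i) Z_i; hence
   F(W_(i+1)) = F(W_i) + h b_i beta(T_i) Z_i, which telescopes to the formula
   for z_1.  The stage formula is the second-order expansion of
   F(W_i) = F(Y_i - c_i T_i Y_i) around Y_i: polarizing F'(y) T y = beta(T) F(y)
   gives F''(T y, T y) = [beta(T)^2 - beta(T^2)] F(y), and T^2 = T o T lies in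
   the Jordan algebra because it is the Jordan square of T. *)

Lemma odd_part_eq (K : numFieldType) (V : lmodType K) (a b c d : V) :
  a + b = c + d -> - a + b = - c + d -> a = c.
Proof.
move=> even odd; have two_neq0 : (2%:R : K) != 0 by rewrite pnatr_eq0.
apply: (scalerI two_neq0).
rewrite !scaler_nat !mulr2n; apply: (addIr (- a + b)).
by rewrite {2}odd [LHS]addrACA [RHS]addrACA !subrr !add0r even.
Qed.

Lemma sum_ord_ltS (V : zmodType) (s : nat) (g : 'I_s -> V) (i : 'I_s) :
  \sum_(j < s | (j < i.+1)%N) g j = \sum_(j < s | (j < i)%N) g j + g i.
Proof.
rewrite (bigD1 i) //= addrC; congr (_ + _); apply: eq_bigl => j.
by rewrite ltnS ltn_neqAle andbC.
Qed.

Section QuadraticMap.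
Variables (K : numFieldType) (Y Z : vectType K).
Variables (F : Y -> Z) (F' : Y -> 'Hom(Y, Z)) (B : Y -> Y -> Z).
Hypothesis quadF : quadratic F F' B.

Lemma bilinC u v : B u v = B v u.
Proof. by case: quadF => [[]]. Qed.

Lemma bilinDl u v w : B (u + v) w = B u w + B v w.
Proof. by case: quadF => [[_ lin] _]; rewrite -[u]scale1r lin !scale1r. Qed.

Lemma bilin0l w : B 0 w = 0.
Proof. by apply: (addrI (B 0 w)); rewrite -bilinDl !addr0. Qed.

Lemma bilinZl a u w : B (a *: u) w = a *: B u w.
Proof. by case: quadF => [[_ lin] _]; rewrite -[a *: u]addr0 lin bilin0l addr0. Qed.

Lemma bilinNl u w : B (- u) w = - B u w.
Proof. by rewrite -scaleN1r bilinZl scaleN1r. Qed.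

Lemma bilinDr u v w : B w (u + v) = B w u + B w v.
Proof. by rewrite bilinC bilinDl !(bilinC _ w). Qed.

Lemma bilinZr a u w : B w (a *: u) = a *: B w u.
Proof. by rewrite bilinC bilinZl bilinC. Qed.

Lemma bilinNr u w : B w (- u) = - B w u.
Proof. by rewrite -scaleN1r bilinZr scaleN1r. Qed.

Lemma quadratic_taylor y d : F (y + d) = F y + F' y d + 2%:R^-1 *: B d d.
Proof. by case: quadF => _ expand; rewrite (expand y) (addrC y) addrK. Qed.

Lemma quadratic_taylorZ y c d :
  F (y + c *: d) = F y + c *: F' y d + (c ^+ 2 / 2%:R) *: B d d.
Proof.
by rewrite quadratic_taylor linearZ bilinZl bilinZr !scalerA mulrC expr2.
Qed.

Lemma quadratic_central_difference y c d :
  F (y + c *: d) = F (y - c *: d) + (c *+ 2) *: F' y d.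
Proof.
rewrite -scaleNr !quadratic_taylorZ sqrrN scaleNr -scalerMnl.
by rewrite [RHS]addrAC mulr2n addrA subrK.
Qed.

Lemma derivative_shift y e d : F' (y + e) d = F' y d + B e d.
Proof.
have := quadratic_taylor y (e + d).
rewrite addrA !quadratic_taylor bilinDl !bilinDr (bilinC d e) linearD !scalerDr.
rewrite -!addrA => /addrI/addrI; rewrite [RHS]addrCA => /addrI.
rewrite !addrA => /addIr ->.
by rewrite -addrA -scalerDl -[2%:R^-1]mul1r -splitr scale1r.
Qed.

Definition covariant (T : 'End(Y)) (S : 'End(Z)) : Prop :=
  forall y, F' y (T y) = S (F y).

Section Covariance.
Variables (T : 'End(Y)) (S S2 : 'End(Z)).
Hypotheses (covT : covariant T S) (covTT : covariant (T \o T)%VF S2).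

Lemma covariant_taylor y u :
  S (F' y u) + 2%:R^-1 *: S (B u u) = F' y (T u) + B u (T y) + B u (T u).
Proof.
have := covT (y + u).
rewrite derivative_shift quadratic_taylor !linearD linearZ /= bilinDr -covT.
by rewrite -!addrA => /addrI ->.
Qed.

Lemma covariant_derivative y u : S (F' y u) = F' y (T u) + B u (T y).
Proof.
apply: (@odd_part_eq K Z _ (2%:R^-1 *: S (B u u)) _ (B u (T u))).
  exact: covariant_taylor.
have := covariant_taylor y (- u).
by rewrite !linearN /= !bilinNl !bilinNr !opprK opprD.
Qed.

Lemma covariant_bilin_sq y : B (T y) (T y) = S (S (F y)) - S2 (F y).
Proof.
by rewrite -covT covariant_derivative -covTT comp_lfunE addrC addKr.
Qed.

Lemma covariant_central_step y c :
  F (y + c *: T y) = F (y - c *: T y) + (c *+ 2) *: S (F y).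
Proof. by rewrite quadratic_central_difference covT. Qed.

Lemma covariant_backward_step y c :
  F (y - c *: T y) =
  F y - c *: S (F y) + (c ^+ 2 / 2%:R) *: ((S \o S)%VF - S2) (F y).
Proof.
rewrite -scaleNr quadratic_taylorZ covT covariant_bilin_sq sqrrN scaleNr.
by rewrite add_lfunE opp_lfunE comp_lfunE.
Qed.

End Covariance.
End QuadraticMap.

Section SyDIRK.
Variables (K : numFieldType) (Y Z : vectType K).
Variables (F : Y -> Z) (F' : Y -> 'Hom(Y, Z)) (B : Y -> Y -> Z).
Hypothesis quadF : quadratic F F' B.
Variables (s : nat) (b : 'I_s -> K) (h : K) (y0 : Y) (Ys : 'I_s -> Y).
Variables (T : 'I_s -> 'End(Y)) (S S2 : 'I_s -> 'End(Z)).
Hypotheses (covT : forall i, covariant F F' (T i) (S i))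
           (covTT : forall i, covariant F F' (T i \o T i)%VF (S2 i)).

Definition partial_update (k : nat) : Y :=
  y0 + h *: \sum_(j < s | (j < k)%N) b j *: T j (Ys j).

Hypothesis stageY :
  forall i : 'I_s, Ys i = partial_update i + (h / 2%:R * b i) *: T i (Ys i).

Lemma partial_update_stage (i : 'I_s) :
  partial_update i = Ys i - (h / 2%:R * b i) *: T i (Ys i).
Proof. by rewrite {1}stageY addrK. Qed.

Lemma partial_update_next (i : 'I_s) :
  partial_update i.+1 = Ys i + (h / 2%:R * b i) *: T i (Ys i).
Proof.
rewrite {1}/partial_update sum_ord_ltS scalerDr addrA -/(partial_update i).
rewrite partial_update_stage scalerA -addrA -scaleNr -scalerDl.
by congr (_ + _ *: _); field.
Qed.

Lemma F_partial_update_next (i : 'I_s) :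
  F (partial_update i.+1) = F (partial_update i) + (h * b i) *: S i (F (Ys i)).
Proof.
rewrite partial_update_next partial_update_stage.
rewrite (covariant_central_step quadF (covT i)).
by congr (_ + _ *: _); rewrite -mulr_natr; field.
Qed.

Lemma F_partial_update k : (k <= s)%N ->
  F (partial_update k) = F y0 + h *: \sum_(j < s | (j < k)%N) b j *: S j (F (Ys j)).
Proof.
elim: k => [_|k IHk lt_ks].
  by rewrite /partial_update !big_pred0 // !scaler0 !addr0.
have -> : k = Ordinal lt_ks by [].
rewrite F_partial_update_next IHk ?(ltnW lt_ks) //.
by rewrite sum_ord_ltS scalerDr scalerA addrA.
Qed.

Lemma F_stage (i : 'I_s) :
  F (Ys i) = F y0 + h *: \sum_(j < s | (j < i)%N) b j *: S j (F (Ys j))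
             + (h / 2%:R * b i) *: S i (F (Ys i))
             - (h ^+ 2 / 8%:R * b i ^+ 2) *: ((S i \o S i)%VF - S2 i) (F (Ys i)).
Proof.
rewrite -F_partial_update 1?ltnW // partial_update_stage.
rewrite (covariant_backward_step quadF (covT i) (covTT i)).
have -> : (h / 2%:R * b i) ^+ 2 / 2%:R = h ^+ 2 / 8%:R * b i ^+ 2 by field.
by rewrite (addrAC _ ((h ^+ 2 / 8%:R * b i ^+ 2) *: _)) subrK addrK.
Qed.

Lemma F_update :
  F (y0 + h *: \sum_(i < s) b i *: T i (Ys i)) =
  F y0 + h *: \sum_(i < s) b i *: S i (F (Ys i)).
Proof.
have := F_partial_update (leqnn s); rewrite /partial_update.
have all_lt : (fun j : 'I_s => (j < s)%N) =1 xpredT by move=> j; apply: ltn_ord.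
by rewrite !(eq_bigl _ _ all_lt).
Qed.

End SyDIRK.

Lemma jordan_prod_sq (K : numFieldType) (Y : vectType K) (T : 'End(Y)) :
  jordan_prod T T = (T \o T)%VF.
Proof.
by rewrite /jordan_prod -mulr2n -scaler_nat scalerA mulVf ?pnatr_eq0 // scale1r.
Qed.

Lemma jordan_algebra_sq_in (K : numFieldType) (Y : vectType K)
    (A : {vspace 'End(Y)}) (T : 'End(Y)) :
  jordan_operator_algebra A -> T \in A -> (T \o T)%VF \in A.
Proof. by move=> jordanA TA; rewrite -jordan_prod_sq jordanA. Qed.

Theorem corollary3p3 (K : numFieldType) (Y Z : vectType K)
    (F : Y -> Z) (F' : Y -> 'Hom(Y, Z)) (F'' : Y -> Y -> Z)
    (A : {vspace 'End(Y)})
    (alpha : Z -> 'End(Y)) (beta : 'End(Y) -> 'End(Z))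
    (s : nat) (b : 'I_s -> K) (h : K)
    (y0 y1 : Y) (Ys : 'I_s -> Y) :
  quadratic F F' F'' ->
  jordan_operator_algebra A ->
  (forall z, alpha z \in A) ->
  (forall y T, T \in A -> F' y (T y) = beta T (F y)) ->
  (forall i, b i != 0) ->
  0 < h ->
  let f := fun y : Y => alpha (F y) y in
  (forall i : 'I_s,
     Ys i = y0 + h *: \sum_(j < s | (j < i)%N) b j *: f (Ys j)
              + (h / 2%:R * b i) *: f (Ys i)) ->
  y1 = y0 + h *: \sum_(i < s) b i *: f (Ys i) ->
  let z0 := F y0 in
  let Zs := fun i => F (Ys i) in
  let z1 := F y1 in
  (forall i : 'I_s,
     Zs i = z0 + h *: \sum_(j < s | (j < i)%N) b j *: beta (alpha (Zs j)) (Zs j)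
              + (h / 2%:R * b i) *: beta (alpha (Zs i)) (Zs i)
              - (h ^+ 2 / 8%:R * b i ^+ 2) *:
                  ((beta (alpha (Zs i)) \o beta (alpha (Zs i)))%VF
                   - beta (alpha (Zs i) \o alpha (Zs i))%VF) (Zs i))
  /\ z1 = z0 + h *: \sum_(i < s) b i *: beta (alpha (Zs i)) (Zs i).
Proof.
move=> quadF jordanA alphaA betaF' _ _ f stageY updY z0 Zs z1.
pose T i := alpha (Zs i).
have covT i : covariant F F' (T i) (beta (T i)) by move=> y; exact: betaF' (alphaA _).
have covTT i : covariant F F' (T i \o T i)%VF (beta (T i \o T i)%VF).
  by move=> y; apply/betaF'/(jordan_algebra_sq_in jordanA)/alphaA.
split=> [i|].
- exact: (F_stage quadF covT covTT stageY).
- by rewrite /z1 updY (F_update quadF covT stageY).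
Qed.
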